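(* Let $n\in\mathbb{N}$ and $(\sigma_1,\delta_2,\sigma_2,\dots,\delta_n,\sigma_n)\in\Sigma_n$, and let $$I_n(\sigma_1,\delta_2,\dots,\delta_n,\sigma_n)=\{x\in(0,1)\colon d_1(x)=\sigma_1,\ \epsilon_i(x)=\delta_i,\ d_i(x)=\sigma_i\ (2\le i\le n)\}.$$ If $\sigma_n$ is odd, this set is a singleton. If $\sigma_n$ is even, it is an open interval with endpoints $$x_1=\sum_{i=1}^{n-1}\frac{\delta_i}{\sigma_1\cdots\sigma_i}+\frac{\delta_n}{\sigma_1\cdots\sigma_{n-1}(\sigma_n-1)},\qquad x_2=\sum_{i=1}^{n-1}\frac{\delta_i}{\sigma_1\cdots\sigma_i}+\frac{\delta_n}{\sigma_1\cdots\sigma_{n-1}(\sigma_n+1)}$$ (with $\delta_1=1$), namely $(x_1,x_2)$ if $\delta_n=-1$ and $(x_2,x_1)$ if $\delta_n=1$. Consequently its length is $0$ if $\sigma_n$ is odd and $\frac{2}{\sigma_1\sigma_2\cdots\sigma_{n-1}(\sigma_n-1)(\sigma_n+1)}$ if $\sigma_n$ is even.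
   Context: Define $T\colon[0,1)\to[0,1)$ by: for $k\in\mathbb{N}$, $Tx=\lceil 1/x\rceil x-1$ if $x\in(\frac{1}{2k},\frac{1}{2k-1})$; $Tx=1-\lfloor 1/x\rfloor x$ if $x\in(\frac{1}{2k+1},\frac{1}{2k})$; $Tx=0$ if $x\in\{0\}\cup\{1/n\colon n\ge 2\}$. For $x\in(0,1)$ define $d_1(x)=\lceil 1/x\rceil$, $s_1(x)=1$ if $x\in[\frac{1}{2k},\frac{1}{2k-1})$ for some $k$, and $d_1(x)=\lfloor 1/x\rfloor$, $s_1(x)=-1$ if $x\in[\frac{1}{2k+1},\frac{1}{2k})$ for some $k$. Set $d_{n+1}(x)=d_1(T^nx)$, $s_{n+1}(x)=s_1(T^nx)$ (when $T^nx\ne0$), $\epsilon_1(x)=1$, $\epsilon_{n+1}(x)=\prod_{k=1}^n s_k(x)$. $\Sigma_1=\{(\sigma_1)\colon \sigma_1\in\mathbb{N},\sigma_1\ge2\}$, and for $n\ge2$, $\Sigma_n$ is the set of tuples $(\sigma_1,\delta_2,\sigma_2,\dots,\delta_n,\sigma_n)$ with $\delta_i\in\{1,-1\}$, positive integers $2\le\sigma_1\le\sigma_2\le\cdots\le\sigma_n$ with $\sigma_i$ even for $1\le i\le n-1$, and (with $\delta_1:=1$) $\sigma_{i+1}\ge\sigma_i+2$ whenever $\delta_{i+1}=-\delta_i$, $1\le i\le n-1$. *)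

From HB Require Import structures.
From mathcomp Require Import all_boot all_order all_algebra.
From mathcomp Require Import all_classical all_reals all_analysis.
Set Implicit Arguments. Unset Strict Implicit. Unset Printing Implicit Defensive.
Import Order.TTheory GRing.Theory Num.Theory.
Local Open Scope ring_scope.

Section Defs.
Variable R : realType.

(* The map T : [0,1) -> [0,1), defined by cases as in the paper
   (value 0 on {0} and on {1/n : n >= 2}, and outside [0,1)). *)
Definition Tmap (x : R) : R :=
  if `[< exists k : nat, (0 < k)%N /\
         1 / (2 * k)%:R < x /\ x < 1 / (2 * k - 1)%:R >]
  then (Num.ceil (1 / x))%:~R * x - 1
  else if `[< exists k : nat, (0 < k)%N /\
         1 / (2 * k + 1)%:R < x /\ x < 1 / (2 * k)%:R >]
  then 1 - (Num.floor (1 / x))%:~R * x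
  else 0.

Definition d1 (x : R) : int :=
  if `[< exists k : nat, (0 < k)%N /\
         1 / (2 * k)%:R <= x /\ x < 1 / (2 * k - 1)%:R >]
  then Num.ceil (1 / x)
  else if `[< exists k : nat, (0 < k)%N /\
         1 / (2 * k + 1)%:R <= x /\ x < 1 / (2 * k)%:R >]
  then Num.floor (1 / x)
  else 0.

Definition s1 (x : R) : int :=
  if `[< exists k : nat, (0 < k)%N /\
         1 / (2 * k)%:R <= x /\ x < 1 / (2 * k - 1)%:R >]
  then 1
  else if `[< exists k : nat, (0 < k)%N /\
         1 / (2 * k + 1)%:R <= x /\ x < 1 / (2 * k)%:R >]
  then -1
  else 0.

Definition digit (i : nat) (x : R) : int := d1 (iter i.-1 Tmap x).
Definition sgn (i : nat) (x : R) : int := s1 (iter i.-1 Tmap x).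

Definition eps (i : nat) (x : R) : int := \prod_(1 <= k < i) sgn k x.

(* The cylinder set I_n(sigma_1, delta_2, sigma_2, ..., delta_n, sigma_n).
   Digits d_i(x) are only defined when T^{i-1} x <> 0, so this is required. *)
Definition Icyl (n : nat) (sigma : nat -> nat) (delta : nat -> int) : set R :=
  [set x | 0 < x /\ x < 1 /\
     (forall i, (1 <= i <= n)%N ->
        iter i.-1 Tmap x != 0 /\ digit i x = (sigma i)%:Z) /\
     (forall i, (2 <= i <= n)%N -> eps i x = delta i)].

Definition prodsig (sigma : nat -> nat) (i : nat) : R :=
  \prod_(1 <= j < i.+1) (sigma j)%:R.

Definition xpt (n : nat) (sigma : nat -> nat) (delta : nat -> int) (c : R) : R :=
  \sum_(1 <= i < n) (delta i)%:~R / prodsig sigma i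
  + (delta n)%:~R / (prodsig sigma n.-1 * ((sigma n)%:R + c)).

End Defs.

Definition delta1 (delta : nat -> int) (i : nat) : int :=
  if i == 1%N then 1 else delta i.

(* (sigma_1, delta_2, sigma_2, ..., delta_n, sigma_n) \in Sigma_n  (n >= 1),
   with 1-based indexing; only the values at indices 1..n matter
   (delta at indices 2..n).  delta_1 := 1 via delta1. *)
Definition inSigma (n : nat) (sigma : nat -> nat) (delta : nat -> int) : Prop :=
  (1 <= n)%N /\
  (2 <= sigma 1)%N /\
  (forall i, (2 <= i <= n)%N -> delta i = 1 \/ delta i = -1) /\
  (forall i, (1 <= i < n)%N -> (sigma i <= sigma i.+1)%N) /\
  (forall i, (1 <= i < n)%N -> ~~ odd (sigma i)) /\
  (forall i, (1 <= i < n)%N ->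
      delta1 delta i.+1 = - delta1 delta i -> (sigma i + 2 <= sigma i.+1)%N).

From HB Require Import structures.
From mathcomp Require Import all_boot all_order all_algebra.
From mathcomp Require Import all_classical all_reals all_analysis.
From mathcomp Require Import ring lra zify.
Import Order.TTheory GRing.Theory Num.Theory.
Local Open Scope ring_scope.
Local Open Scope classical_set_scope.

(* On each branch of T one has d_1(y) y = 1 + s_1(y) T(y); conversely, for an
   even digit s and a sign e with (s - e) y' < 1, the point y = (1 + e y') / s
   has digit s, sign e and T(y) = y'.  Since s_1(T^(i-1) x) = eps_i eps_(i+1),
   induction on m shows that I_m is the image of the rank-one cylinder
   {y in (0,1) : d_1(y) = sigma_m} under the affine map
     y |-> sum_(i<m) delta_i / (sigma_1...sigma_i) + delta_m y / (sigma_1...sigma_(m-1)),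
   the conditions defining Sigma_n being exactly what makes every inverse branch
   defined.  The rank-one cylinder is {1/sigma_n} for odd sigma_n and the interval
   (1/(sigma_n+1), 1/(sigma_n-1)) for even sigma_n, and the affine images of these
   are the claimed sets. *)

Section FirstDigit.
Context {R : realType}.
Implicit Types (y : R) (k s : nat).

Lemma ceil_recip y s : 0 < y ->
  (s%:R - 1) * y < 1 -> 1 <= s%:R * y -> Num.ceil (1 / y) = s%:Z.
Proof.
move=> y0 lo hi; apply: ceil_def.
rewrite intrB ltr_pdivlMr // ler_pdivrMr //.
by apply/andP; split.
Qed.

Lemma floor_recip y s : 0 < y ->
  s%:R * y <= 1 -> 1 < (s%:R + 1) * y -> Num.floor (1 / y) = s%:Z.
Proof.
move=> y0 lo hi; apply: floor_def.
rewrite intrD ler_pdivlMr // ltr_pdivrMr //.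
by apply/andP; split.
Qed.

Lemma recip_natE k y : (0 < k)%N ->
  ((1 / (2 * k)%:R <= y) = (1 <= 2 * k%:R * y)) *
  ((1 / (2 * k)%:R < y) = (1 < 2 * k%:R * y)) *
  ((y < 1 / (2 * k)%:R) = (2 * k%:R * y < 1)) *
  ((1 / (2 * k + 1)%:R <= y) = (1 <= (2 * k%:R + 1) * y)) *
  ((1 / (2 * k + 1)%:R < y) = (1 < (2 * k%:R + 1) * y)) *
  ((y < 1 / (2 * k - 1)%:R) = ((2 * k%:R - 1) * y < 1)).
Proof.
move=> k0; have recipE a : 0 < a -> ((1 / a <= y) = (1 <= a * y)) * ((1 / a < y) = (1 < a * y))
  * ((y < 1 / a) = (a * y < 1)).
  by move=> a0; rewrite ler_pdivrMr // ltr_pdivrMr // ltr_pdivlMr // ![y * _]mulrC.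
rewrite !recipE ?ltr0n; try lia.
rewrite natrB; last lia.
by rewrite natrD natrM mulr1n.
Qed.

Lemma d1_s1_plus y k : (0 < k)%N ->
  1 <= 2 * k%:R * y -> (2 * k%:R - 1) * y < 1 -> d1 y = (2 * k)%:Z /\ s1 y = 1.
Proof.
move=> k0 lo hi; have k1 : 1 <= k%:R :> R by rewrite ler1n.
have y0 : 0 < y by nra.
rewrite /d1 /s1 asboolT; last by exists k; rewrite !(recip_natE _ _ k0).
by split=> //; apply: ceil_recip; rewrite // natrM.
Qed.

(* [d1], [s1] and [Tmap] test the branch of sign +1 first. *)
Lemma not_plus_branch y k : (0 < k)%N -> 0 < y ->
  2 * k%:R * y < 1 -> 1 <= (2 * k%:R + 1) * y ->
  ~ exists k', (0 < k')%N /\ 1 / (2 * k')%:R <= y /\ y < 1 / (2 * k' - 1)%:R.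
Proof.
move=> k0 y0 lo hi [k' [k'0]]; rewrite !(recip_natE _ _ k'0) => -[lo' hi'].
have : Num.ceil (1 / y) = (2 * k + 1)%:Z.
  by apply: ceil_recip; rewrite // natrD natrM mulr1n; lra.
rewrite (@ceil_recip _ (2 * k')) ?natrM //.
by move/eqP; rewrite eqz_nat; lia.
Qed.

Lemma d1_s1_minus y k : (0 < k)%N ->
  2 * k%:R * y < 1 -> 1 <= (2 * k%:R + 1) * y ->
  d1 y = Num.floor (1 / y) /\ s1 y = -1.
Proof.
move=> k0 lo hi; have k1 : 1 <= k%:R :> R by rewrite ler1n.
have y0 : 0 < y by nra.
rewrite /d1 /s1 asboolF; last exact: not_plus_branch k0 y0 lo hi.
by rewrite asboolT //; exists k; rewrite !(recip_natE _ _ k0).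
Qed.

Lemma Tmap_plus y k : (0 < k)%N ->
  1 < 2 * k%:R * y -> (2 * k%:R - 1) * y < 1 -> Tmap y = 2 * k%:R * y - 1.
Proof.
move=> k0 lo hi; have k1 : 1 <= k%:R :> R by rewrite ler1n.
have y0 : 0 < y by nra.
rewrite /Tmap asboolT; last by exists k; rewrite !(recip_natE _ _ k0).
by rewrite -natrM (@ceil_recip _ (2 * k)) // natrM //; apply: ltW.
Qed.

Lemma Tmap_minus y k : (0 < k)%N ->
  2 * k%:R * y < 1 -> 1 < (2 * k%:R + 1) * y -> Tmap y = 1 - 2 * k%:R * y.
Proof.
move=> k0 lo hi; have k1 : 1 <= k%:R :> R by rewrite ler1n.
have y0 : 0 < y by nra.
rewrite /Tmap asboolF; last first.
  move=> [k' [k'0 [lo' hi']]]; apply: not_plus_branch k0 y0 lo (ltW hi) _.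
  by exists k'; split; [|split; [exact: ltW|]].
rewrite asboolT; last by exists k; rewrite !(recip_natE _ _ k0).
by rewrite -natrM (@floor_recip _ (2 * k)) // natrM //; apply: ltW.
Qed.

Lemma Tmap_neq0 y : Tmap y != 0 ->
  (exists2 k, (0 < k)%N & 1 < 2 * k%:R * y /\ (2 * k%:R - 1) * y < 1) \/
  (exists2 k, (0 < k)%N & 2 * k%:R * y < 1 /\ 1 < (2 * k%:R + 1) * y).
Proof.
rewrite /Tmap; case: asboolP => [[k [k0]]|_].
  by rewrite !(recip_natE _ _ k0) => -[lo hi] _; left; exists k.
case: asboolP => [[k [k0]]|_]; last by rewrite eqxx.
by rewrite !(recip_natE _ _ k0) => -[lo hi] _; right; exists k.
Qed.

Lemma Tmap_branch y : Tmap y != 0 ->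
  [/\ 0 < Tmap y, Tmap y < 1 & (d1 y)%:~R * y = 1 + (s1 y)%:~R * Tmap y].
Proof.
move=> T0; case: (Tmap_neq0 _ T0) => -[k k0 [lo hi]];
  have k1 : 1 <= k%:R :> R by rewrite ler1n.
- have [-> ->] := d1_s1_plus _ _ k0 (ltW lo) hi.
  rewrite (Tmap_plus _ _ k0 lo hi) -pmulrn natrM mulr1z.
  by split; [lra | nra | ring].
- have [-> ->] := d1_s1_minus _ _ k0 lo (ltW hi).
  have -> : Num.floor (1 / y) = (2 * k)%:Z by apply: floor_recip; rewrite ?natrM //; nra.
  rewrite (Tmap_minus _ _ k0 lo hi) -pmulrn natrM mulrN1z.
  by split; [lra | nra | ring].
Qed.

Definition cyl1 s : set R := [set y | 0 < y < 1 /\ d1 y = s%:Z].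

Lemma even_double s : ~~ odd s -> (0 < s)%N -> exists2 k, (0 < k)%N & s = (2 * k)%N.
Proof.
move=> ev s0; exists s./2; have := odd_double_half s; rewrite (negbTE ev) -mul2n; lia.
Qed.

Lemma Tmap_branch_inv s (e : int) y' : ~~ odd s -> (0 < s)%N ->
  e = 1 \/ e = -1 -> 0 < y' -> (s%:R - e%:~R) * y' < 1 ->
  let y := (1 + e%:~R * y') / s%:R in [/\ cyl1 s y, s1 y = e & Tmap y = y'].
Proof.
move=> ev s0 he y'0; have [k k0 ->] := even_double _ ev s0 => hy y.
have k1 : 1 <= k%:R :> R by rewrite ler1n.
have ey : 2 * k%:R * y = 1 + e%:~R * y' by rewrite /y natrM mulrC divfK ?gt_eqF; nra.
rewrite natrM in hy; move: y ey => y ey.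
case: he => he; rewrite he ?mulr1z ?mulrN1z in ey hy *.
- have lo : 1 < 2 * k%:R * y by lra.
  have hi : (2 * k%:R - 1) * y < 1 by nra.
  have [hd hs] := d1_s1_plus _ _ k0 (ltW lo) hi.
  rewrite (Tmap_plus _ _ k0 lo hi); split=> //; last by lra.
  by split=> //; apply/andP; split; nra.
- have lo : 2 * k%:R * y < 1 by lra.
  have hi : 1 < (2 * k%:R + 1) * y by nra.
  have [hd hs] := d1_s1_minus _ _ k0 lo (ltW hi).
  have y0 : 0 < y by nra.
  rewrite (Tmap_minus _ _ k0 lo hi); split=> //; last by lra.
  split; first by apply/andP; split; nra.
  by rewrite hd (@floor_recip _ (2 * k)) ?natrM //; apply: ltW.
Qed.

Lemma cyl1_even s : ~~ odd s -> (0 < s)%N ->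
  cyl1 s = `]1 / (s%:R + 1), 1 / (s%:R - 1)[.
Proof.
move=> ev s0; have [k k0 ->] := even_double _ ev s0.
have k1 : 1 <= k%:R :> R by rewrite ler1n.
rewrite natrM; apply/seteqP; split=> y /=;
  rewrite in_itv /= ltr_pdivrMr ?ltr_pdivlMr; try nra.
- case=> /andP[y0 y1]; rewrite /d1.
  case: asboolP => [_ /eqP|_].
    rewrite ceil_eq intrB -pmulrn natrM ltr_pdivlMr // ler_pdivrMr //.
    by case/andP=> lo hi; apply/andP; split; nra.
  case: asboolP => [_ /eqP|_]; last by move/eqP; rewrite eqz_nat; lia.
  rewrite floor_eq intrD -pmulrn natrM ler_pdivlMr // ltr_pdivrMr //.
  by case/andP=> lo hi; apply/andP; split; nra.
- case/andP=> lo hi; have y0 : 0 < y by nra.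
  split; first by apply/andP; split; nra.
  have [{}lo {}hi] : 1 < (2 * k%:R + 1) * y /\ (2 * k%:R - 1) * y < 1 by split; nra.
  case: (lerP 1 (2 * k%:R * y)) => h; first by case: (d1_s1_plus _ _ k0 h hi).
  have [-> _] := d1_s1_minus _ _ k0 h (ltW lo).
  by rewrite (@floor_recip _ (2 * k)) ?natrM //; apply: ltW.
Qed.

Lemma cyl1_odd s : odd s -> (1 < s)%N -> cyl1 s = [set 1 / s%:R].
Proof.
move=> od s1; have [k k0 ->] : exists2 k, (0 < k)%N & s = (2 * k + 1)%N.
  by exists s./2; have := odd_double_half s; rewrite od -mul2n; lia.
have k1 : 1 <= k%:R :> R by rewrite ler1n.
have nz : (2 * k + 1)%:R != 0 :> R by rewrite pnatr_eq0; lia.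
rewrite natrD natrM mulr1n in nz *; apply/seteqP; split=> y /=.
- case=> /andP[y0 y1]; rewrite /d1.
  case: asboolP => [[k' [k'0]]|_].
    rewrite !(recip_natE _ _ k'0) => -[lo hi].
    rewrite (@ceil_recip _ (2 * k')) ?natrM //; first by move/eqP; rewrite eqz_nat; lia.
  case: asboolP => [[k' [k'0]]|_]; last by move/eqP; rewrite eqz_nat; lia.
  rewrite !(recip_natE _ _ k'0) => -[lo' hi'] /eqP.
  rewrite floor_eq intrD mulr1z -pmulrn natrD natrM mulr1n ler_pdivlMr // ltr_pdivrMr //.
  case/andP=> lo hi.
  have kk' : (k <= k')%N by rewrite -(ler_nat R); nra.
  have k'k : (k' < k + 1)%N by rewrite -(ltr_nat R) natrD; nra.
  have kk : k' = k by lia.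
  subst k'.
  have e : (2 * k%:R + 1) * y = 1 by lra.
  by apply: (mulfI nz); rewrite e mul1r mulfV.
- move=> {y}->; set y := 1 / _.
  have e : (2 * k%:R + 1) * y = 1 by rewrite /y mul1r mulfV.
  have y0 : 0 < y by rewrite /y divr_gt0 //; nra.
  split; first by apply/andP; split; nra.
  have lo : 2 * k%:R * y < 1 by lra.
  have hi : 1 <= (2 * k%:R + 1) * y by rewrite e.
  have [-> _] := d1_s1_minus _ _ k0 lo hi.
  by rewrite (@floor_recip _ (2 * k + 1)) //; rewrite natrD natrM mulr1n; nra.
Qed.

Lemma cyl1_lt s y : (1 < s)%N -> cyl1 s y -> (s%:R - 1) * y < 1.
Proof.
move=> s1; have s0 : 1 < s%:R :> R by rewrite ltr1n.
case: (boolP (odd s)) => [od|ev].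
  rewrite cyl1_odd // => ->.
  have -> : (s%:R - 1) * (1 / s%:R) = 1 - 1 / s%:R :> R by field; lra.
  by rewrite gtrBl divr_gt0 //; lra.
rewrite cyl1_even ?(ltnW s1) //= in_itv /= => /andP[_].
by rewrite ltr_pdivlMr 1?mulrC ?subr_gt0.
Qed.

End FirstDigit.

Lemma IcylS {R : realType} m sigma delta (x : R) :
  Icyl m.+1 sigma delta x <->
  [/\ Icyl m sigma delta x, iter m (@Tmap R) x != 0,
       d1 (iter m (@Tmap R) x) = (sigma m.+1)%:Z & eps m.+1 x = delta1 delta m.+1].
Proof.
split.
- case=> x0 [x1 [hd he]]; have [T0 hd0] := hd m.+1 (leqnn _).
  split=> //; first by split=> //; split=> //; split=> i hi; [apply: hd | apply: he]; lia.
  rewrite /delta1; case: eqP => [m0|m1]; last by apply: he; lia.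
  by rewrite m0 /eps big_geq.
- case=> -[x0 [x1 [hd he]]] T0 hd0 he0; split=> //; split=> //; split=> i hi.
  + case: (ltnP i m.+1) => hi'; first by apply: hd; lia.
    by have -> : i = m.+1 by lia.
  + case: (ltnP i m.+1) => hi'; first by apply: he; lia.
    have ei : i = m.+1 by lia.
    by subst i; rewrite he0 /delta1; case: eqP => //; lia.
Qed.

Lemma eps_Icyl {R : realType} {m sigma delta} {x : R} :
  Icyl m.+1 sigma delta x -> eps m.+1 x = delta1 delta m.+1.
Proof. by case/IcylS. Qed.

Lemma epsS {R : realType} m (x : R) :
  eps m.+2 x = eps m.+1 x * s1 (iter m (@Tmap R) x).
Proof. by rewrite /eps big_nat_recr. Qed.

Lemma prodsigS (R : realType) sigma m :
  prodsig R sigma m.+1 = prodsig R sigma m * (sigma m.+1)%:R.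
Proof. by rewrite /prodsig big_nat_recr. Qed.

Lemma image_affine_itv_oo_incr (R : realFieldType) (f : R -> R) (a c u v : R) :
  (forall y, f y = a + c * y) -> 0 < c -> f @` `]u, v[ = `]f u, f v[.
Proof.
move=> fE c0; apply/seteqP; split=> [_ [y + <-] | x] /=.
  by rewrite !in_itv /= !fE !ltrD2l !ltr_pM2l.
rewrite in_itv /= !fE => /andP[ux xv]; exists ((x - a) / c).
  by rewrite in_itv /= ltr_pdivlMr // ltr_pdivrMr //; apply/andP; split; lra.
by rewrite fE mulrC divfK ?gt_eqF // addrC subrK.
Qed.

Lemma image_affine_itv_oo_decr (R : realFieldType) (f : R -> R) (a c u v : R) :
  (forall y, f y = a + c * y) -> c < 0 -> f @` `]u, v[ = `]f v, f u[.
Proof.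
move=> fE c0; apply/seteqP; split=> [_ [y + <-] | x] /=.
  by rewrite !in_itv /= !fE !ltrD2l !ltr_nM2l // andbC.
rewrite in_itv /= !fE => /andP[vx xu]; exists ((x - a) / c).
  by rewrite in_itv /= ltr_ndivlMr // ltr_ndivrMr //; apply/andP; split; lra.
by rewrite fE mulrC divfK ?lt_eqF // addrC subrK.
Qed.

Lemma lebesgue_measure_itv_oo (R : realType) (a b : R) : a < b ->
  lebesgue_measure (`]a, b[%classic : set R) = (b - a)%:E.
Proof. by move=> ab; rewrite lebesgue_measure_itv /= lte_fin ab EFinD. Qed.

Section Cylinders.
Context {R : realType} {n : nat} {sigma : nat -> nat} {delta : nat -> int}.
Hypothesis sigmaP : inSigma n sigma delta.
Local Notation D i := (delta1 delta i).
Local Notation P := (prodsig R sigma).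

Definition cylmap m (y : R) : R :=
  \sum_(1 <= i < m) (D i)%:~R / P i + (D m)%:~R * y / P m.-1.

Lemma delta1_sign i : (1 <= i <= n)%N -> D i = 1 \/ D i = -1.
Proof.
have [_ [_ [dP _]]] := sigmaP; rewrite /delta1; case: eqP => [_|i1] hi; first by left.
by apply: dP; lia.
Qed.

Lemma delta1_sqr i : (1 <= i <= n)%N -> D i * D i = 1.
Proof. by case/delta1_sign => ->. Qed.

Lemma sigma_ge2 i : (1 <= i <= n)%N -> (2 <= sigma i)%N.
Proof.
have [_ [s1 [_ [mono _]]]] := sigmaP.
elim: i => [|[|i] IH] hi //; have := mono i.+1; have := IH; lia.
Qed.

Lemma sigma_even i : (1 <= i < n)%N -> ~~ odd (sigma i).
Proof. by have [_ [_ [_ [_ [ev _]]]]] := sigmaP; apply: ev. Qed.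

Lemma sigma_jump m : (1 <= m < n)%N ->
  (sigma m)%:R - (D m * D m.+1)%:~R <= (sigma m.+1)%:R - 1 :> R.
Proof.
move=> hm; have [_ [_ [_ [mono [_ jump]]]]] := sigmaP.
have := mono m hm; rewrite -(ler_nat R) => le_m.
have := jump m hm; rewrite -(ler_nat R) natrD => jump_m.
have [] := delta1_sign m _; try lia; move=> hDm;
  have [] := delta1_sign m.+1 _; try lia; move=> hDm1;
  rewrite hDm hDm1 ?mulrNN ?mulN1r ?mulrN1 ?mul1r ?mulr1z ?mulrN1z in jump_m *; try lra.
- by have := jump_m erefl; lra.
- by have := jump_m (esym (opprK 1)); lra.
Qed.

Lemma prodsig_gt0 m : (m <= n)%N -> 0 < P m.
Proof.
elim: m => [|m IH] mn; first by rewrite /prodsig big_geq.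
by rewrite prodsigS mulr_gt0 ?IH 1?ltnW // ltr0n; have := sigma_ge2 m.+1; lia.
Qed.

Lemma cylmap1 y : cylmap 1 y = y.
Proof. by rewrite /cylmap big_geq // /prodsig big_geq // add0r mulr1z mul1r divr1. Qed.

Lemma cylmapS m y y' : (m.+2 <= n)%N ->
  (sigma m.+1)%:R * y = 1 + (D m.+1 * D m.+2)%:~R * y' ->
  cylmap m.+1 y = cylmap m.+2 y'.
Proof.
move=> mn e; have P0 : P m != 0 by rewrite gt_eqF // prodsig_gt0 //; lia.
have s0 : (sigma m.+1)%:R != 0 :> R.
  by rewrite pnatr_eq0 -lt0n; have := sigma_ge2 m.+1; lia.
have -> : y = (1 + (D m.+1 * D m.+2)%:~R * y') / (sigma m.+1)%:R.
  by rewrite -e [_ * y]mulrC mulfK.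
rewrite /cylmap [in RHS]big_nat_recr //= prodsigS -addrA; congr (_ + _).
have [] := delta1_sign m.+1 _; try lia; move=> ->;
  have [] := delta1_sign m.+2 _; try lia; move=> ->;
  rewrite ?mulrNN ?mulN1r ?mulrN1 ?mul1r ?mulr1z ?mulrN1z; field; exact/andP.
Qed.

Lemma Icyl_iter m x : (m < n)%N -> Icyl m.+1 sigma delta x ->
  cyl1 (sigma m.+1) (iter m (@Tmap R) x) /\ x = cylmap m.+1 (iter m (@Tmap R) x).
Proof.
elim: m x => [|m IH] x mn hx.
  case/IcylS: hx => -[x0 [x1 _]] _ hd _.
  by rewrite cylmap1; split=> //; split=> //; apply/andP.
case/IcylS: (hx) => hxm T0 hd he.
have [[_ hdy] ex] := IH x (ltnW mn) hxm.
move: T0 hd he hdy ex; rewrite epsS (eps_Icyl hxm) /=.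
set y := iter m _ x => T0 hd he hdy ex.
have [Ty0 Ty1 eT] := Tmap_branch _ T0.
have hs : s1 y = D m.+1 * D m.+2 by rewrite -he mulrA delta1_sqr ?mul1r //; lia.
split; first by rewrite /cyl1 /= Ty0 Ty1.
by rewrite ex; apply: cylmapS => //; rewrite -hs -eT hdy.
Qed.

Lemma cylmap_Icyl m y : (m < n)%N -> cyl1 (sigma m.+1) y ->
  Icyl m.+1 sigma delta (cylmap m.+1 y) /\ iter m (@Tmap R) (cylmap m.+1 y) = y.
Proof.
elim: m y => [|m IH] y' mn [/andP[y'0 y'1] hd].
  rewrite cylmap1; split=> //; apply/IcylS; split=> //; last by rewrite /eps big_geq.
    by split=> //; split=> //; split=> i hi; exfalso; lia.
  by rewrite gt_eqF.
have s0 : (0 < sigma m.+1)%N by have := sigma_ge2 m.+1; lia.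
have ev : ~~ odd (sigma m.+1) by apply: sigma_even; lia.
set e := D m.+1 * D m.+2.
have he : e = 1 \/ e = -1.
  by rewrite /e; case: (delta1_sign m.+1) => [|->|->]; try lia;
    case: (delta1_sign m.+2) => [|->|->]; try lia; auto.
have hlt : ((sigma m.+1)%:R - e%:~R) * y' < 1.
  apply: (@le_lt_trans _ _ (((sigma m.+2)%:R - 1) * y')).
    by apply: ler_wpM2r; [exact: ltW | rewrite /e; apply: sigma_jump; lia].
  by apply: cyl1_lt; [apply: sigma_ge2; lia | split; rewrite ?y'0 ?y'1].
have [hy hs1 hT] := Tmap_branch_inv _ _ _ ev s0 he y'0 hlt.
set y := (1 + e%:~R * y') / _ in hy hs1 hT.
have [hx hit] := IH y (ltnW mn) hy.
have ex : cylmap m.+1 y = cylmap m.+2 y'.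
  by apply: cylmapS => //; rewrite /y mulrC divfK // pnatr_eq0 -lt0n.
rewrite -ex; split; last by rewrite iterS hit hT.
apply/IcylS; split=> //; rewrite ?iterS ?hit ?hT ?gt_eqF //.
by rewrite epsS (eps_Icyl hx) hit hs1 /e mulrA delta1_sqr ?mul1r //; lia.
Qed.

Lemma Icyl_image : Icyl n sigma delta = cylmap n @` cyl1 (sigma n).
Proof.
have [n1 _] := sigmaP; have [m nm] : exists m, n = m.+1 by exists n.-1; lia.
have mn : (m < n)%N by lia.
rewrite [in LHS]nm [in RHS]nm; apply/seteqP; split=> [x hx | _ [y hy <-]].
  by have [hy ex] := Icyl_iter m x mn hx; exists (iter m (@Tmap R) x).
exact: (cylmap_Icyl m y mn hy).1.
Qed.

Lemma xpt_cylmap c : xpt n sigma (delta1 delta) c = cylmap n (1 / ((sigma n)%:R + c)).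
Proof. by rewrite /xpt /cylmap mul1r invfM mulrA mulrAC. Qed.

Lemma cylmapE y : cylmap n y = cylmap n 0 + ((D n)%:~R / P n.-1) * y.
Proof. by rewrite /cylmap mulr0 mul0r addr0 mulrAC. Qed.

Lemma Icyl_even_incr : ~~ odd (sigma n) -> D n = 1 ->
  @Icyl R n sigma delta =
    `]xpt n sigma (delta1 delta) 1, xpt n sigma (delta1 delta) (-1)[%classic.
Proof.
move=> ev hD; have [n1 _] := sigmaP; have s0 : (0 < sigma n)%N by have := sigma_ge2 n; lia.
rewrite !xpt_cylmap Icyl_image cyl1_even //.
apply: (@image_affine_itv_oo_incr R (cylmap n) _ _ _ _ cylmapE).
by rewrite hD mulr1z div1r invr_gt0 prodsig_gt0 // leq_pred.
Qed.

Lemma Icyl_even_decr : ~~ odd (sigma n) -> D n = -1 ->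
  @Icyl R n sigma delta =
    `]xpt n sigma (delta1 delta) (-1), xpt n sigma (delta1 delta) 1[%classic.
Proof.
move=> ev hD; have [n1 _] := sigmaP; have s0 : (0 < sigma n)%N by have := sigma_ge2 n; lia.
rewrite !xpt_cylmap Icyl_image cyl1_even //.
apply: (@image_affine_itv_oo_decr R (cylmap n) _ _ _ _ cylmapE).
by rewrite hD mulrN1z mulNr div1r oppr_lt0 invr_gt0 prodsig_gt0 // leq_pred.
Qed.

Lemma xpt_gap : xpt n sigma (delta1 delta) (-1) - xpt n sigma (delta1 delta) 1 =
  (D n)%:~R * (2 / (P n.-1 * ((sigma n)%:R - 1) * ((sigma n)%:R + 1))).
Proof.
have [n1 _] := sigmaP; have P0 : P n.-1 != 0 by rewrite gt_eqF // prodsig_gt0 // leq_pred.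
have s1 : 1 < (sigma n)%:R :> R by rewrite ltr1n; have := sigma_ge2 n; lia.
by rewrite /xpt; field; rewrite P0 /=; apply/andP; split; rewrite ?gt_eqF //; lra.
Qed.

Lemma Icyl_odd : odd (sigma n) -> exists x0 : R, Icyl n sigma delta = [set x0].
Proof.
move=> od; have [n1 _] := sigmaP.
have s1 : (1 < sigma n)%N by have := sigma_ge2 n; lia.
by rewrite Icyl_image cyl1_odd // image_set1; eexists.
Qed.

Lemma lebesgue_measure_Icyl_even : ~~ odd (sigma n) ->
  lebesgue_measure (@Icyl R n sigma delta) =
    (2 / (P n.-1 * ((sigma n)%:R - 1) * ((sigma n)%:R + 1)))%:E.
Proof.
move=> ev; have [n1 _] := sigmaP; have gap := xpt_gap.
have gap0 : 0 < 2 / (P n.-1 * ((sigma n)%:R - 1) * ((sigma n)%:R + 1)).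
  have P0 := prodsig_gt0 _ (leq_pred n).
  have s1 : 1 < (sigma n)%:R :> R by rewrite ltr1n; have := sigma_ge2 n; lia.
  by rewrite divr_gt0 // !mulr_gt0 //; lra.
have [] := delta1_sign n _; try lia; move=> hD;
  rewrite hD ?mulr1z ?mulrN1z ?mulN1r ?mul1r in gap.
  rewrite Icyl_even_incr // (lebesgue_measure_itv_oo R); last by rewrite -subr_gt0 gap.
  by congr (_%:E); exact: gap.
rewrite Icyl_even_decr // (lebesgue_measure_itv_oo R).
  by congr (_%:E); rewrite -opprB gap opprK.
by rewrite -subr_gt0 -opprB gap opprK.
Qed.

End Cylinders.

Theorem proposition2p2 (R : realType) (n : nat) (sigma : nat -> nat)
  (delta : nat -> int) :
  inSigma n sigma delta ->
  let I : set R := Icyl n sigma delta in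
  let x1 : R := xpt n sigma (delta1 delta) (-1) in
  let x2 : R := xpt n sigma (delta1 delta) 1 in
  (odd (sigma n) ->
     (exists x0 : R, I = [set x0]) /\
     (lebesgue_measure I = 0%E)) /\
  (~~ odd (sigma n) ->
     (delta1 delta n = -1 -> I = `]x1, x2[%classic) /\
     (delta1 delta n = 1 -> I = `]x2, x1[%classic) /\
     (lebesgue_measure I =
        (2 / (prodsig R sigma n.-1 * ((sigma n)%:R - 1) * ((sigma n)%:R + 1)))%:E)).
Proof.
move=> sigmaP I x1 x2; split=> [od | ev].
  have [x0 hI] := Icyl_odd (R:=R) sigmaP od.
  by split; [exists x0 | rewrite /I hI lebesgue_measure_set1].
split; [move=> hD | split; [move=> hD |]].
- exact: Icyl_even_decr.
- exact: Icyl_even_incr.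
- exact: lebesgue_measure_Icyl_even.
Qed.
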